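(* Let $M\ge 2$, $D,Q,K$ positive integers, and let $\varphi:\mathbb{R}^D\times R\to\mathbb{R}^K$, $(\bm{x},\rho)\mapsto\varphi(\bm{x};\rho)$, be a function on a parameter set $R$ such that for every $\bm{x}\in\mathbb{R}^D$ there exists $\rho\in R$ with $\varphi(\bm{x};\rho)\neq\bm{0}$. Consider networks $\mathcal{F}=\{F_i\}_{i=1}^M$ with $F_i(\bm{x}) = \bm{W}^i\varphi(\bm{x};\rho^i)$, parametrised by $\bm{W}^i\in\mathbb{R}^{Q\times K}$ and $\rho^i\in R$. Let $\mathcal{D}=\{(\bm{x}_n,\bm{y}_n)\}_{n=1}^N$ be a nonempty finite data set in $\mathbb{R}^D\times\mathbb{R}^Q$, $\overline{F}=\frac1M\sum_i F_i$, and $$E_\lambda(\mathcal{F},\mathcal{D}) = \frac{1}{N}\sum_{n=1}^N\Big(\frac{1}{M}\sum_{i=1}^M\|F_i(\bm{x}_n)-\bm{y}_n\|^2-\lambda\frac{1}{M}\sum_{i=1}^M\|F_i(\bm{x}_n)-\overline{F}(\bm{x}_n)\|^2\Big).$$ With infima over all parametrisations $(\bm{W}^i,\rho^i)_{i=1}^M$: (i) if $\lambda\le1$ then $\inf E_\lambda(\mathcal{F},\mathcal{D})\ge0$; (ii) if $\lambda>1$ then $\inf E_\lambda(\mathcal{F},\mathcal{D})=-\infty$. Moreover, if $\lambda>1$, then for all $Q_1,Q_2>0$ there exists a parametrisation with $E_\lambda(\mathcal{F},\mathcal{D})<-Q_1$, $\frac1N\sum_n\|\overline{F}(\bm{x}_n)-\bm{y}_n\|^2>Q_2$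 and $\frac1N\sum_n\frac1M\sum_i\|F_i(\bm{x}_n)-\bm{y}_n\|^2>Q_2$.
   Context: Networks of this form are called Modular Linear Top Layer Networks. $\|\cdot\|$ is the Euclidean norm. *)

From HB Require Import structures.
From mathcomp Require Import all_boot all_order all_algebra.
From mathcomp Require Import all_classical all_reals all_analysis.
Set Implicit Arguments. Unset Strict Implicit. Unset Printing Implicit Defensive.
Import Order.TTheory GRing.Theory Num.Theory.
Local Open Scope ring_scope.

Definition sqnorm (R : realType) (n : nat) (v : 'cV[R]_n) : R :=
  \sum_(i < n) (v i 0) ^+ 2.

Definition netF (R : realType) (P : Type) (D Q K M : nat)
  (phi : 'cV[R]_D -> P -> 'cV[R]_K)
  (W : 'I_M -> 'M[R]_(Q, K)) (rho : 'I_M -> P) (i : 'I_M) (x : 'cV[R]_D)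
  : 'cV[R]_Q := W i *m phi x (rho i).

Definition netFbar (R : realType) (P : Type) (D Q K M : nat)
  (phi : 'cV[R]_D -> P -> 'cV[R]_K)
  (W : 'I_M -> 'M[R]_(Q, K)) (rho : 'I_M -> P) (x : 'cV[R]_D) : 'cV[R]_Q :=
  (M%:R)^-1 *: \sum_(i < M) netF phi W rho i x.

Definition Elam (R : realType) (P : Type) (D Q K M N : nat)
  (phi : 'cV[R]_D -> P -> 'cV[R]_K)
  (xs : 'I_N -> 'cV[R]_D) (ys : 'I_N -> 'cV[R]_Q) (lam : R)
  (W : 'I_M -> 'M[R]_(Q, K)) (rho : 'I_M -> P) : R :=
  (N%:R)^-1 * \sum_(n < N)
    ((M%:R)^-1 * \sum_(i < M) sqnorm (netF phi W rho i (xs n) - ys n)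
     - lam * ((M%:R)^-1 *
        \sum_(i < M) sqnorm (netF phi W rho i (xs n) - netFbar phi W rho (xs n)))).

Definition ensErr (R : realType) (P : Type) (D Q K M N : nat)
  (phi : 'cV[R]_D -> P -> 'cV[R]_K)
  (xs : 'I_N -> 'cV[R]_D) (ys : 'I_N -> 'cV[R]_Q)
  (W : 'I_M -> 'M[R]_(Q, K)) (rho : 'I_M -> P) : R :=
  (N%:R)^-1 * \sum_(n < N) sqnorm (netFbar phi W rho (xs n) - ys n).

Definition avgErr (R : realType) (P : Type) (D Q K M N : nat)
  (phi : 'cV[R]_D -> P -> 'cV[R]_K)
  (xs : 'I_N -> 'cV[R]_D) (ys : 'I_N -> 'cV[R]_Q)
  (W : 'I_M -> 'M[R]_(Q, K)) (rho : 'I_M -> P) : R :=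
  (N%:R)^-1 * \sum_(n < N)
    ((M%:R)^-1 * \sum_(i < M) sqnorm (netF phi W rho i (xs n) - ys n)).

Definition infE (R : realType) (P : Type) (D Q K M N : nat)
  (phi : 'cV[R]_D -> P -> 'cV[R]_K)
  (xs : 'I_N -> 'cV[R]_D) (ys : 'I_N -> 'cV[R]_Q) (lam : R) : \bar R :=
  ereal_inf [set (Elam phi xs ys lam p.1 p.2)%:E
            | p in [set: ('I_M -> 'M[R]_(Q, K)) * ('I_M -> P)]]%classic.

From HB Require Import structures.
From mathcomp Require Import all_boot all_order all_algebra.
From mathcomp Require Import all_classical all_reals all_analysis.
From mathcomp Require Import ring lra.
Import Order.TTheory GRing.Theory Num.Theory.
Local Open Scope ring_scope.
Set Implicit Arguments. Unset Strict Implicit.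

(* At every input, the mean squared error of the members equals the squared
   error of the ensemble mean plus the ambiguity, the mean squared deviation of
   the members from their mean.  Hence E_lambda is the ensemble error plus
   (1 - lambda) times the mean ambiguity, which is nonnegative for lambda <= 1.
   For lambda > 1 take every member to be a multiple s_i A phi(x; r) of one
   readout that does not vanish on the data: the ensemble error grows like
   (mean s)^2 while the ambiguity is variance(s) times a fixed quantity, so
   spreading two members until (lambda - 1) variance(s) exceeds 3 (mean s)^2,
   and letting mean s grow, sends E_lambda to -oo while both errors blow up. *)

Definition mean (R : numFieldType) n (f : 'I_n -> R) : R := n%:R^-1 * \sum_(i < n) f i.

Definition variance (R : numFieldType) n (a : 'I_n -> R) : R :=
  mean (fun i => (a i - mean a) ^+ 2).

Section Mean.
Variable R : realFieldType.

Lemma mean_sum m n (F : 'I_m -> 'I_n -> R) :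
  mean (fun i => \sum_(q < n) F i q) = \sum_(q < n) mean (fun i => F i q).
Proof. by rewrite /mean exchange_big mulr_sumr. Qed.

Lemma meanD n (f g : 'I_n -> R) : mean (fun i => f i + g i) = mean f + mean g.
Proof. by rewrite /mean big_split mulrDr. Qed.

Lemma meanZ n (c : R) (f : 'I_n -> R) : mean (fun i => c * f i) = c * mean f.
Proof. by rewrite /mean -mulr_sumr mulrCA. Qed.

Lemma mean_cst n (c : R) : (0 < n)%N -> mean (fun _ : 'I_n => c) = c.
Proof.
move=> n_gt0; rewrite /mean sumr_const card_ord -[c *+ n]mulr_natl.
by rewrite mulKf // pnatr_eq0 -lt0n.
Qed.

Lemma meanB n (f g : 'I_n -> R) : mean (fun i => f i - g i) = mean f - mean g.
Proof. by rewrite /mean sumrB mulrBr. Qed.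

Lemma ler_mean n (f g : 'I_n -> R) : (forall i, f i <= g i) -> mean f <= mean g.
Proof. by move=> fg; rewrite ler_wpM2l ?invr_ge0 ?ler0n // ler_sum. Qed.

Lemma mean_ge0 n (f : 'I_n -> R) : (forall i, 0 <= f i) -> 0 <= mean f.
Proof. by move=> f0; rewrite mulr_ge0 ?invr_ge0 ?ler0n ?sumr_ge0. Qed.

Lemma mean_gt0 n (f : 'I_n -> R) j : (forall i, 0 <= f i) -> 0 < f j -> 0 < mean f.
Proof.
move=> f0 fj0; rewrite mulr_gt0 ?invr_gt0 ?ltr0n //; first exact: leq_ltn_trans (ltn_ord j).
by rewrite (bigD1 j) //= ltr_wpDr ?sumr_ge0.
Qed.

Lemma mean_sqrB n (a : 'I_n -> R) (b : R) : (0 < n)%N ->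
  mean (fun i => (a i - b) ^+ 2) = (mean a - b) ^+ 2 + variance a.
Proof.
move=> n0; rewrite /variance; set m := mean a.
have mean_dev : mean (fun i => a i - m) = 0 by rewrite meanD mean_cst // subrr.
transitivity (mean (fun i => (a i - m) ^+ 2 + (2 * (m - b) * (a i - m) + (m - b) ^+ 2))).
  by congr mean; apply/funext => i; ring.
by rewrite !meanD meanZ mean_dev mean_cst //; ring.
Qed.

Section Spread.
Variables (n : nat) (i0 i1 : 'I_n).

Definition spread (a b : R) (i : 'I_n) : R := a + b * ((i == i0)%:R - (i == i1)%:R).

Lemma mean_spread a b : mean (spread a b) = a.
Proof.
have sum_indicator j : \sum_(i < n) ((i == j)%:R : R) = 1.
  by rewrite (bigD1 j) //= eqxx big1 ?addr0 // => i /negPf ->.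
rewrite meanD meanZ mean_cst; last exact: leq_ltn_trans (ltn_ord i0).
by rewrite /mean sumrB !sum_indicator subrr mulr0 mulr0 addr0.
Qed.

Lemma variance_spread_ge a b : i0 != i1 -> b ^+ 2 / n%:R <= variance (spread a b).
Proof.
move=> i01; rewrite /variance mean_spread /mean mulrC ler_wpM2l ?invr_ge0 ?ler0n //.
rewrite (bigD1 i0) //= /spread eqxx (negPf i01) subr0 mulr1 addrAC subrr add0r.
by rewrite lerDl sumr_ge0 // => i _; exact: sqr_ge0.
Qed.

End Spread.

End Mean.

Section SquaredNorm.
Variable R : realType.

Lemma sqnorm_ge0 n (v : 'cV[R]_n) : 0 <= sqnorm v.
Proof. by rewrite sumr_ge0 // => i _; rewrite sqr_ge0. Qed.

Lemma sqnormZ n (k : R) (v : 'cV[R]_n) : sqnorm (k *: v) = k ^+ 2 * sqnorm v.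
Proof. by rewrite /sqnorm mulr_sumr; apply: eq_bigr => i _; rewrite mxE exprMn. Qed.

Lemma sqnormN n (v : 'cV[R]_n) : sqnorm (- v) = sqnorm v.
Proof. by rewrite -scaleN1r sqnormZ sqrrN expr1n mul1r. Qed.

Lemma sqnormD_le n (u v : 'cV[R]_n) : sqnorm (u + v) <= 2 * sqnorm u + 2 * sqnorm v.
Proof.
rewrite /sqnorm !mulr_sumr -big_split /=; apply: ler_sum => i _; rewrite mxE.
by have := sqr_ge0 (u i 0 - v i 0); nra.
Qed.

Lemma sqnormB_le n (u v : 'cV[R]_n) : sqnorm (u - v) <= 2 * sqnorm u + 2 * sqnorm v.
Proof. by rewrite -(sqnormN v); exact: sqnormD_le. Qed.

Lemma sqnorm_le_subD n (u v : 'cV[R]_n) : sqnorm u <= 2 * sqnorm (u - v) + 2 * sqnorm v.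
Proof. by rewrite -{1}(subrK v u); exact: sqnormD_le. Qed.

Lemma sqnorm_gt0 n (v : 'cV[R]_n) : v != 0 -> 0 < sqnorm v.
Proof.
move=> v0; rewrite lt_def sqnorm_ge0 andbT; apply: contra v0.
rewrite psumr_eq0 => [/allP v_eq0|i _]; last exact: sqr_ge0.
apply/eqP/matrixP => i j; rewrite (ord1 j) mxE.
by apply/eqP; rewrite -sqrf_eq0; exact: implyP (v_eq0 i (mem_index_enum i)) isT.
Qed.

Lemma mean_sqnormB m n (a : 'I_m -> 'cV[R]_n) (b : 'cV[R]_n) : (0 < m)%N ->
  mean (fun i => sqnorm (a i - b)) =
  sqnorm (m%:R^-1 *: \sum_(j < m) a j - b)
  + mean (fun i => sqnorm (a i - m%:R^-1 *: \sum_(j < m) a j)).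
Proof.
move=> m0.
have abarE q : (m%:R^-1 *: \sum_(j < m) a j) q 0 = mean (fun i => a i q 0).
  by rewrite !mxE summxE.
rewrite /sqnorm !mean_sum -big_split /=; apply: eq_bigr => q _.
have -> : mean (fun i => (a i - b) q 0 ^+ 2) = mean (fun i => (a i q 0 - b q 0) ^+ 2).
  by congr (mean _); apply/funext => i; rewrite !mxE.
have /= -> := mean_sqrB (fun i => a i q 0) (b q 0) m0.
rewrite /variance -abarE; congr (_ + _); first by rewrite !mxE.
by congr (mean _); apply/funext => i; rewrite !mxE.
Qed.

End SquaredNorm.

Section Ensemble.
Variables (R : realType) (P : Type) (D Q K M N : nat).
Variables (phi : 'cV[R]_D -> P -> 'cV[R]_K) (xs : 'I_N -> 'cV[R]_D) (ys : 'I_N -> 'cV[R]_Q).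
Hypothesis M_gt0 : (0 < M)%N.
Implicit Types (W : 'I_M -> 'M[R]_(Q, K)) (rho : 'I_M -> P).

Definition ambiguity W rho (x : 'cV[R]_D) : R :=
  mean (fun i => sqnorm (netF phi W rho i x - netFbar phi W rho x)).

Lemma ambiguity_ge0 W rho x : 0 <= ambiguity W rho x.
Proof. by apply: mean_ge0 => i; exact: sqnorm_ge0. Qed.

Lemma mean_sqnorm_netFB W rho x y :
  mean (fun i => sqnorm (netF phi W rho i x - y)) =
  sqnorm (netFbar phi W rho x - y) + ambiguity W rho x.
Proof. exact: mean_sqnormB. Qed.

Lemma ElamE lam W rho : Elam phi xs ys lam W rho =
  mean (fun n => sqnorm (netFbar phi W rho (xs n) - ys n)
                 + (1 - lam) * ambiguity W rho (xs n)).
Proof.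
transitivity (mean (fun n =>
  mean (fun i => sqnorm (netF phi W rho i (xs n) - ys n)) - lam * ambiguity W rho (xs n))) => //.
by congr (mean _); apply/funext => n; rewrite mean_sqnorm_netFB; ring.
Qed.

Lemma avgErrE W rho : avgErr phi xs ys W rho =
  ensErr phi xs ys W rho + mean (fun n => ambiguity W rho (xs n)).
Proof.
rewrite -meanD; congr (mean _); apply/funext => n; exact: mean_sqnorm_netFB.
Qed.

Lemma Elam_ge0 lam W rho : lam <= 1 -> 0 <= Elam phi xs ys lam W rho.
Proof.
move=> lam_le1; rewrite ElamE; apply: mean_ge0 => n.
by rewrite addr_ge0 ?sqnorm_ge0 // mulr_ge0 ?subr_ge0 ?ambiguity_ge0.
Qed.

Section Scaled.
Variables (r : P) (A : 'M[R]_(Q, K)).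

Definition scaled_weights (s : 'I_M -> R) : 'I_M -> 'M[R]_(Q, K) := fun i => s i *: A.

Let Z := mean (fun n => sqnorm (A *m phi (xs n) r)).
Let Y := mean (fun n => sqnorm (ys n)).

Lemma netF_scaled s i x :
  netF phi (scaled_weights s) (fun=> r) i x = s i *: (A *m phi x r).
Proof. by rewrite /netF scalemxAl. Qed.

Lemma netFbar_scaled s x :
  netFbar phi (scaled_weights s) (fun=> r) x = mean s *: (A *m phi x r).
Proof.
by rewrite /netFbar (eq_bigr _ (fun i _ => netF_scaled s i x)) -scaler_suml scalerA.
Qed.

Lemma ambiguity_scaled s x :
  ambiguity (scaled_weights s) (fun=> r) x = variance s * sqnorm (A *m phi x r).
Proof.
rewrite mulrC -meanZ; congr (mean _); apply/funext => i.
by rewrite netF_scaled netFbar_scaled -scalerBl sqnormZ mulrC.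
Qed.

Lemma Elam_scaled_le lam s :
  Elam phi xs ys lam (scaled_weights s) (fun=> r) <=
  (2 * mean s ^+ 2 + (1 - lam) * variance s) * Z + 2 * Y.
Proof.
set c := 2 * mean s ^+ 2 + _.
have -> : c * Z + 2 * Y = mean (fun n => c * sqnorm (A *m phi (xs n) r) + 2 * sqnorm (ys n)).
  by rewrite meanD !meanZ.
rewrite ElamE; apply: ler_mean => n; rewrite netFbar_scaled ambiguity_scaled /c.
have := sqnormB_le (mean s *: (A *m phi (xs n) r)) (ys n); rewrite sqnormZ.
lra.
Qed.

Lemma ensErr_scaled_ge s :
  mean s ^+ 2 / 2 * Z - Y <= ensErr phi xs ys (scaled_weights s) (fun=> r).
Proof.
rewrite /Z /Y -meanZ -meanB; apply: ler_mean => n.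
rewrite netFbar_scaled.
have := sqnorm_le_subD (mean s *: (A *m phi (xs n) r)) (ys n); rewrite sqnormZ.
lra.
Qed.

End Scaled.

Lemma exists_readout_mean_sqnorm_gt0 : (0 < N)%N -> (0 < Q)%N ->
  (forall x, exists p, phi x p != 0) ->
  exists (r : P) (A : 'M[R]_(Q, K)), 0 < mean (fun n => sqnorm (A *m phi (xs n) r)).
Proof.
move=> N_gt0 Q_gt0 phi_nz; pose n0 := Ordinal N_gt0.
have [r v_nz] := phi_nz (xs n0); set v := phi (xs n0) r in v_nz.
pose A : 'M[R]_(Q, K) := \matrix_(q, k) v k 0.
have Av_entry : (A *m v) (Ordinal Q_gt0) 0 = sqnorm v.
  by rewrite !mxE; apply: eq_bigr => k _; rewrite mxE expr2.
exists r, A; apply: (mean_gt0 (j := n0)) => [n|]; first exact: sqnorm_ge0.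
apply: sqnorm_gt0; apply/negP => /eqP Av0.
by have := sqnorm_gt0 v_nz; rewrite -Av_entry Av0 mxE ltxx.
Qed.

Lemma Elam_unbounded_below : (2 <= M)%N -> (0 < N)%N -> (0 < Q)%N ->
  (forall x, exists p, phi x p != 0) ->
  forall lam : R, 1 < lam -> forall Q1 Q2 : R, 0 < Q1 -> 0 < Q2 ->
  exists W rho, Elam phi xs ys lam W rho < - Q1 /\
    ensErr phi xs ys W rho > Q2 /\ avgErr phi xs ys W rho > Q2.
Proof.
move=> M_ge2 N_gt0 Q_gt0 phi_nz lam lam_gt1 Q1 Q2 Q1_gt0 Q2_gt0.
have [r [A Z_gt0]] := exists_readout_mean_sqnorm_gt0 N_gt0 Q_gt0 phi_nz.
set Z := mean _ in Z_gt0; set Y := mean (fun n => sqnorm (ys n)).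
have Y_ge0 : 0 <= Y by apply: mean_ge0 => n; exact: sqnorm_ge0.
(* [T] is the square of the mean of [s]; [T * Z] dominates [Q1 + 2 Y] and [2 (Q2 + Y)]. *)
pose T := (Q1 + 2 * Q2 + 4 * Y) / Z + 1.
have T_ge0 : 0 <= T by rewrite addr_ge0 ?divr_ge0 ?ltW //; lra.
have TZ : T * Z = Q1 + 2 * Q2 + 4 * Y + Z by rewrite /T mulrDl divfK ?mul1r ?lt0r_neq0.
pose i0 : 'I_M := Ordinal M_gt0; pose i1 : 'I_M := Ordinal M_ge2.
pose b2 := 3 * M%:R * T / (lam - 1).
pose s := spread i0 i1 (Num.sqrt T) (Num.sqrt b2).
have mean_s2 : mean s ^+ 2 = T by rewrite mean_spread sqr_sqrtr.
have var_s : (1 - lam) * variance s <= - 3 * T.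
  have b2_ge0 : 0 <= b2 by rewrite divr_ge0 ?mulr_ge0 ?ler0n // subr_ge0 ltW.
  have lam1_neq0 : lam - 1 != 0 by rewrite subr_eq0 gt_eqF.
  have <- : (1 - lam) * (Num.sqrt b2 ^+ 2 / M%:R) = - 3 * T.
    by rewrite sqr_sqrtr // /b2; field; rewrite lam1_neq0 pnatr_eq0 -lt0n M_gt0.
  by rewrite ler_wnM2l ?variance_spread_ge //; lra.
have E_le := Elam_scaled_le r A lam s; have F_ge := ensErr_scaled_ge r A s.
rewrite -/Z -/Y mean_s2 in E_le F_ge.
have E_scale : (2 * T + (1 - lam) * variance s) * Z <= - (T * Z).
  by rewrite -mulNr ler_pM2r //; lra.
have F_scale : T / 2 * Z = T * Z / 2 by rewrite mulrAC.
have A_ge0 : 0 <= mean (fun n => ambiguity (scaled_weights A s) (fun=> r) (xs n)).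
  by apply: mean_ge0 => n; exact: ambiguity_ge0.
exists (scaled_weights A s), (fun=> r); rewrite avgErrE //; lra.
Qed.

End Ensemble.

Theorem theorem5 (R : realType) (P : Type) (M D Q K N : nat)
  (phi : 'cV[R]_D -> P -> 'cV[R]_K)
  (xs : 'I_N -> 'cV[R]_D) (ys : 'I_N -> 'cV[R]_Q) :
  (2 <= M)%N -> (0 < D)%N -> (0 < Q)%N -> (0 < K)%N -> (0 < N)%N ->
  (forall x : 'cV[R]_D, exists rho : P, phi x rho != 0) ->
  (forall lam : R, lam <= 1 ->
     (0 <= @infE R P D Q K M N phi xs ys lam)%E) /\
  (forall lam : R, 1 < lam ->
     @infE R P D Q K M N phi xs ys lam = -oo%E) /\
  (forall lam : R, 1 < lam -> forall Q1 Q2 : R, 0 < Q1 -> 0 < Q2 ->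
     exists (W : 'I_M -> 'M[R]_(Q, K)) (rho : 'I_M -> P),
       Elam phi xs ys lam W rho < - Q1 /\
       ensErr phi xs ys W rho > Q2 /\
       avgErr phi xs ys W rho > Q2).
Proof.
move=> M_ge2 _ Q_gt0 _ N_gt0 phi_nz.
have unbounded := Elam_unbounded_below xs ys (ltnW M_ge2) M_ge2 N_gt0 Q_gt0 phi_nz.
split; [|split] => //.
- move=> lam lam_le1; apply/ereal_infP => _ [p _ <-].
  by rewrite lee_fin Elam_ge0 // (ltnW M_ge2).
- move=> lam lam_gt1; apply: eq_ninfty => x.
  have [W [rho [E_lt _]]] := unbounded lam lam_gt1 (x ^+ 2 + 1) 1
    (ltr_wpDl (sqr_ge0 x) ltr01) ltr01.
  apply: ge_ereal_inf; exists (Elam phi xs ys lam W rho)%:E; first by exists (W, rho).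
  by rewrite lee_fin; nra.
Qed.
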